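(* Let $\omega:\Gamma^2\to\Gamma$ be a surjective group morphism. Then $G(\mathrm{ad}(h)\circ\omega)\cong G(\omega)$ for all $h\in\Gamma$.
   Context: $\mathrm{ad}(h)(g)=hgh^{-1}$. $\{0,1\}^*$ denotes the finite words over $\{0,1\}$; $\mathfrak C=\{0,1\}^{\mathbb N}$. A finite complete prefix code is a finite set $\{t_1,\dots,t_n\}\subset\{0,1\}^*$ such that every $x\in\mathfrak C$ has exactly one $t_i$ as prefix. Thompson's group $V$ is the group of homeomorphisms $v$ of $\mathfrak C$ for which there exist finite complete prefix codes $\{t_i\},\{s_i\}$ and a permutation $\sigma$ with $v(t_iw)=s_{\sigma(i)}w$. For a group morphism $\omega:\Gamma^2\to\Gamma$, $K(\omega)$ is the group of maps $a:\{0,1\}^*\to\Gamma$ (pointwise product) with $a(u)=\omega(a(u0),a(u1))$ for all $u$; $V$ acts on it by $\pi(v)(a)(s_{\sigma(i)}u)=a(t_iu)$ for all $i$, $u$ (determining $\pi(v)(a)\in K(\omega)$ uniquely); $G(\omega):=K(\omega)\rtimes V$ with $vav^{-1}=\pi(v)(a)$. *)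

From HB Require Import structures.
From mathcomp Require Import all_boot.
From mathcomp Require Import monoid.
From Stdlib Require Import ClassicalEpsilon.

Set Implicit Arguments.
Unset Strict Implicit.
Unset Printing Implicit Defensive.

Local Open Scope group_scope.

Definition cantor := nat -> bool.
Definition word := seq bool.

Definition hasPrefix (t : word) (x : cantor) : Prop :=
  forall i, (i < size t)%N -> x i = nth false t i.

Definition catw (t : word) (w : cantor) : cantor :=
  fun n => if (n < size t)%N then nth false t n else w (n - size t)%N.

(* {t_0,...,t_{n-1}} is a finite complete prefix code: every x has exactly
   one t_i as prefix (in particular the t_i are pairwise distinct). *)
Definition complete_prefix_code (n : nat) (t : 'I_n -> word) : Prop :=
  forall x : cantor, exists! i : 'I_n, hasPrefix (t i) x.

Definition cantor_continuous (f : cantor -> cantor) : Prop :=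
  forall (x : cantor) (N : nat), exists M : nat, forall y : cantor,
    (forall i, (i < M)%N -> y i = x i) ->
    forall j, (j < N)%N -> f y j = f x j.

Definition homeomorphism (f : cantor -> cantor) : Prop :=
  exists g : cantor -> cantor,
    [/\ cancel f g, cancel g f, cantor_continuous f & cantor_continuous g].

Definition code_rep (n : nat) (t s : 'I_n -> word) (sigma : 'I_n -> 'I_n)
    (v : cantor -> cantor) : Prop :=
  [/\ complete_prefix_code t, complete_prefix_code s, injective sigma &
      forall (i : 'I_n) (w : cantor), v (catw (t i) w) = catw (s (sigma i)) w].

Definition inV (v : cantor -> cantor) : Prop :=
  homeomorphism v /\
  exists (n : nat) (t s : 'I_n -> word) (sigma : 'I_n -> 'I_n), code_rep t s sigma v.

Section K.
Variable Gamma : groupType.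

Definition group_morph2 (omega : Gamma -> Gamma -> Gamma) : Prop :=
  forall x1 y1 x2 y2 : Gamma,
    omega (x1 * x2) (y1 * y2) = omega x1 y1 * omega x2 y2.

Definition surjective2 (omega : Gamma -> Gamma -> Gamma) : Prop :=
  forall g : Gamma, exists x y : Gamma, omega x y = g.

Definition ad_comp (h : Gamma) (omega : Gamma -> Gamma -> Gamma) :=
  fun x y => h * omega x y * h^-1.

Definition inK (omega : Gamma -> Gamma -> Gamma) (a : word -> Gamma) : Prop :=
  forall u : word, a u = omega (a (rcons u false)) (a (rcons u true)).

Definition Kmul (a b : word -> Gamma) : word -> Gamma := fun u => a u * b u.

Definition piRel (omega : Gamma -> Gamma -> Gamma) (v : cantor -> cantor)
    (a b : word -> Gamma) : Prop :=
  inK omega b /\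
  exists (n : nat) (t s : 'I_n -> word) (sigma : 'I_n -> 'I_n),
    code_rep t s sigma v /\
    forall (i : 'I_n) (u : word), b (s (sigma i) ++ u) = a (t i ++ u).

(* the (uniquely determined) element pi(v)(a) *)
Definition pi (omega : Gamma -> Gamma -> Gamma) (v : cantor -> cantor)
    (a : word -> Gamma) : word -> Gamma :=
  epsilon (inhabits a) (piRel omega v a).

(* G(omega) = K(omega) x| V : elements are pairs (a, v) *)
Definition Gcarrier := ((word -> Gamma) * (cantor -> cantor))%type.

Definition inG (omega : Gamma -> Gamma -> Gamma) (x : Gcarrier) : Prop :=
  inK omega x.1 /\ inV x.2.

Definition Gmul (omega : Gamma -> Gamma -> Gamma) (x y : Gcarrier) : Gcarrier :=
  (Kmul x.1 (pi omega x.2 y.1), x.2 \o y.2).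

Definition G_isomorphic (omega1 omega2 : Gamma -> Gamma -> Gamma) : Prop :=
  exists f : Gcarrier -> Gcarrier,
    [/\ forall x, inG omega1 x -> inG omega2 (f x),
        forall y, inG omega2 y -> exists! x, inG omega1 x /\ f x = y &
        forall x y, inG omega1 x -> inG omega1 y ->
          f (Gmul omega1 x y) = Gmul omega2 (f x) (f y)].
End K.

(** Write ω' := ad(h) ∘ ω and ω'' := h·ω, so that ω''(x, y) = h ω(x, y).  As ω is
   surjective, so is ω'', and an element c of K(ω'') can be built top-down from the
   root.  For a in K(ω') and c, e in K(ω'') the map u ↦ c(u)⁻¹ a(u) e(u) lies in K(ω),
   since the factors h and h⁻¹ cancel.  Hence (a, v) ↦ (c⁻¹ a π_v(c), v) maps G(ω')
   bijectively onto G(ω); it is formally conjugation by c, and it is multiplicative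
   because π_v(a) is characterised cylinder by cylinder (π_v(a)(q) = a(p) whenever v
   replaces the prefix p by q), so that π_v commutes with pointwise operations and
   π_v ∘ π_w = π_{vw}. *)
From Pilot Require Import Defs.
From mathcomp Require Import all_boot.
From mathcomp Require Import monoid zify.
From Stdlib Require Import ClassicalEpsilon FunctionalExtensionality.

Set Implicit Arguments.
Unset Strict Implicit.
Unset Printing Implicit Defensive.

Implicit Types (p q r : word) (x y : cantor) (v w : cantor -> cantor).

Lemma catw_cat p q x : catw (p ++ q) x = catw p (catw q x).
Proof.
apply: functional_extensionality => n; rewrite /catw size_cat nth_cat.
case: (ltnP n (size p)) => Hn; first by rewrite (leq_trans Hn) ?leq_addr.
have -> : (n - size p < size q) = (n < size p + size q) by lia.
by case: ifP => // _; rewrite subnDA.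
Qed.

Lemma catw_inj p q : (forall x, catw p x = catw q x) -> p = q.
Proof.
move=> E; wlog le_pq : p q E / size p <= size q.
  move=> sym; case: (leqP (size p) (size q)) => [|/ltnW]; first exact: sym.
  by move=> le_qp; symmetry; apply: sym => // x; rewrite E.
have size_pq : size p = size q.
  apply/eqP; rewrite eqn_leq le_pq leqNgt; apply/negP => lt_pq.
  move: (E (fun _ => ~~ nth false q (size p))).
  move/(congr1 (fun f => f (size p))); rewrite /catw ltnn lt_pq.
  by case: (nth false q (size p)).
apply: (eq_from_nth (x0 := false)) => // i lt_ip.
move: (E (fun _ => false)) => /(congr1 (fun f => f i)).
by rewrite /catw lt_ip -size_pq lt_ip.
Qed.

Lemma hasPrefix_catw p x : hasPrefix p (catw p x).
Proof. by move=> i lt_ip; rewrite /catw lt_ip. Qed.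

Lemma hasPrefix_catwE p y : hasPrefix p y -> y = catw p (fun n => y (n + size p)).
Proof.
move=> Hp; apply: functional_extensionality => n; rewrite /catw.
by case: ifP => lt_np; [rewrite Hp | congr y; lia].
Qed.

Lemma hasPrefix_mkseq L x : hasPrefix (mkseq x L) x.
Proof. by move=> i; rewrite size_mkseq => lt_iL; rewrite nth_mkseq. Qed.

Lemma hasPrefix_mkseqE p x : hasPrefix p x -> p = mkseq x (size p).
Proof.
move=> Hp; apply: (eq_from_nth (x0 := false)); first by rewrite size_mkseq.
by move=> i lt_ip; rewrite nth_mkseq // Hp.
Qed.

Lemma prefix_code_covers_long_words n (s : 'I_n -> word) :
  complete_prefix_code s ->
  exists N, forall q, N <= size q -> exists k r, q = s k ++ r.
Proof.
move=> code_s; exists (\max_(k < n) size (s k)) => q long_q.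
have [k [sk_prefix _]] := code_s (catw q (fun _ => false)).
have le_sk_q : size (s k) <= size q.
  by apply: leq_trans long_q; exact: (@leq_bigmax _ (fun k => size (s k)) k).
have sk_take : s k = take (size (s k)) q.
  apply: (eq_from_nth (x0 := false)) => [|i lt_i]; first by rewrite size_takel.
  by rewrite nth_take // -sk_prefix // /catw (leq_trans lt_i le_sk_q).
by exists k, (drop (size (s k)) q); rewrite {1}sk_take cat_take_drop.
Qed.

Definition maps_prefix v p q := forall x, v (catw p x) = catw q x.

Lemma maps_prefix_cat v p q r : maps_prefix v p q -> maps_prefix v (p ++ r) (q ++ r).
Proof. by move=> Hpq x; rewrite !catw_cat Hpq. Qed.

Lemma maps_prefix_comp v w p q r :
  maps_prefix w p q -> maps_prefix v q r -> maps_prefix (v \o w) p r.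
Proof. by move=> Hpq Hqr x /=; rewrite Hpq Hqr. Qed.

Definition maps_long_prefixes v :=
  exists N, forall p, N <= size p -> exists q, maps_prefix v p q.

Definition reaches_long_prefixes v :=
  exists N, forall q, N <= size q -> exists p, maps_prefix v p q.

Section CodeRep.
Variables (n : nat) (t s : 'I_n -> word) (sigma : 'I_n -> 'I_n) (v : cantor -> cantor).
Hypothesis v_rep : code_rep t s sigma v.

Lemma code_rep_maps_prefix i r : maps_prefix v (t i ++ r) (s (sigma i) ++ r).
Proof. by apply: maps_prefix_cat; case: v_rep => _ _ _ v_code x; apply: v_code. Qed.

Lemma code_rep_maps_long_prefixes : maps_long_prefixes v.
Proof.
case: v_rep => code_t _ _ _.
have [N long_t] := prefix_code_covers_long_words code_t.
exists N => p /long_t[i [r ->]]; exists (s (sigma i) ++ r).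
exact: code_rep_maps_prefix.
Qed.

Lemma code_rep_reaches_long_prefixes : reaches_long_prefixes v.
Proof.
case: v_rep => _ code_s inj_sigma _.
have [N long_s] := prefix_code_covers_long_words code_s.
have [sigma' sigmaK sigma'K] := injF_bij inj_sigma.
exists N => q /long_s[k [r ->]]; exists (t (sigma' k) ++ r).
by rewrite -{2}[k]sigma'K; apply: code_rep_maps_prefix.
Qed.

End CodeRep.

Lemma inV_maps_long_prefixes v : inV v -> maps_long_prefixes v.
Proof. by case=> _ [n [t [s [sigma /code_rep_maps_long_prefixes]]]]. Qed.

Lemma inV_reaches_long_prefixes v : inV v -> reaches_long_prefixes v.
Proof. by case=> _ [n [t [s [sigma /code_rep_reaches_long_prefixes]]]]. Qed.

Lemma inV_inj v : inV v -> injective v.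
Proof. by case=> [[g [vK _ _ _]] _]; exact: can_inj vK. Qed.

Lemma maps_long_prefixes_comp v w :
  maps_long_prefixes v -> maps_long_prefixes w -> maps_long_prefixes (v \o w).
Proof.
move=> [Nv long_v] [Nw long_w]; exists (Nw + Nv) => p long_p.
rewrite -(cat_take_drop Nw p).
have [m Hm] := long_w (take Nw p) ltac:(rewrite size_take_min; lia).
have [q Hq] := long_v (m ++ drop Nw p) ltac:(rewrite size_cat size_drop; lia).
by exists q; apply: maps_prefix_comp Hq; apply: maps_prefix_cat.
Qed.

Lemma cantor_continuous_comp f g :
  cantor_continuous f -> cantor_continuous g -> cantor_continuous (f \o g).
Proof.
move=> cont_f cont_g x N; have [M1 H1] := cont_f (g x) N; have [M2 H2] := cont_g x M1.
by exists M2 => y Hy j Hj /=; apply: H1 => // i Hi; apply: H2.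
Qed.

Lemma homeomorphism_comp f g :
  homeomorphism f -> homeomorphism g -> homeomorphism (f \o g).
Proof.
move=> [f' [fK f'K cont_f cont_f']] [g' [gK g'K cont_g cont_g']].
exists (g' \o f'); split; try exact: cantor_continuous_comp.
  by move=> x /=; rewrite fK gK.
by move=> x /=; rewrite g'K f'K.
Qed.

Definition words_of_size L (i : 'I_#|{: L.-tuple bool}|) : word := val (enum_val i).

Lemma complete_prefix_code_words_of_size L : complete_prefix_code (@words_of_size L).
Proof.
move=> x; pose xL : L.-tuple bool := Tuple (introT eqP (size_mkseq x L)).
exists (enum_rank xL); split.
  by rewrite /words_of_size enum_rankK; apply: hasPrefix_mkseq.
move=> j /hasPrefix_mkseqE; rewrite /words_of_size size_tuple => xj.
by rewrite -[j]enum_valK; congr enum_rank; apply: val_inj; rewrite /= -xj.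
Qed.

Lemma inV_of_maps_long_prefixes v : homeomorphism v -> maps_long_prefixes v -> inV v.
Proof.
move=> homeo_v [L long_v]; split=> //; case: homeo_v => g [vK gK _ _].
pose t := @words_of_size L.
pose s i := epsilon (inhabits [::]) (maps_prefix v (t i)).
have t_s i : maps_prefix v (t i) (s i).
  by apply: epsilon_spec; apply: long_v; rewrite size_tuple.
have prefix_s i y : hasPrefix (s i) y <-> hasPrefix (t i) (g y).
  split=> [/hasPrefix_catwE ->|/hasPrefix_catwE E].
    by rewrite -t_s vK; apply: hasPrefix_catw.
  by rewrite -[y]gK E t_s; apply: hasPrefix_catw.
exists #|{: L.-tuple bool}|, t, s, id; split=> //.
  exact: complete_prefix_code_words_of_size.
move=> y; have [i [t_gy uniq_i]] := complete_prefix_code_words_of_size L (g y).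
by exists i; split=> [|j /prefix_s]; [apply/prefix_s | apply: uniq_i].
Qed.

Lemma inV_comp v w : inV v -> inV w -> inV (v \o w).
Proof.
move=> Vv Vw; apply: inV_of_maps_long_prefixes.
  by case: Vv => ? _; case: Vw => ? _; exact: homeomorphism_comp.
by apply: maps_long_prefixes_comp; apply: inV_maps_long_prefixes.
Qed.

Definition transports (T : Type) v (a b : word -> T) :=
  forall p q, maps_prefix v p q -> b q = a p.

Section Action.
Variable Gamma : groupType.
Local Open Scope group_scope.
Variable W : Gamma -> Gamma -> Gamma.
Implicit Types (a b e : word -> Gamma) (N : nat).

Lemma inK_eq_of_long_extensions a b p q N : inK W a -> inK W b ->
  (forall r, N <= size r -> b (q ++ r) = a (p ++ r)) -> b q = a p.
Proof.
move=> Ka Kb long_eq.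
suff eq_ext k r : N <= k + size r -> b (q ++ r) = a (p ++ r).
  by have := eq_ext N [::] (leq_addr _ _); rewrite !cats0.
elim: k r => [|k IHk] r le_N; first exact: long_eq.
by rewrite Ka Kb !rcons_cat !IHk // size_rcons; lia.
Qed.

Fixpoint fill_down (base : word -> Gamma) (m : nat) q : Gamma :=
  if m is m'.+1 then
    W (fill_down base m' (rcons q false)) (fill_down base m' (rcons q true))
  else base q.

Lemma inK_extend N base :
  (forall q, N <= size q -> base q = W (base (rcons q false)) (base (rcons q true))) ->
  exists b, inK W b /\ forall q, N <= size q -> b q = base q.
Proof.
move=> base_K; exists (fun q => fill_down base (N - size q) q).
split=> [q|q long_q]; last by have -> : N - size q = 0 by lia.
have size_rcons_q z : N - size (rcons q z) = (N - size q).-1 by rewrite size_rcons; lia.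
rewrite !size_rcons_q; case: (leqP N (size q)) => [long_q|short_q].
  have -> : N - size q = 0 by lia.
  exact: base_K.
have : 0 < N - size q by rewrite subn_gt0.
by case: (N - size q).
Qed.

Lemma transports_exists a v : inK W a -> injective v -> reaches_long_prefixes v ->
  exists b, inK W b /\ transports v a b.
Proof.
move=> Ka inj_v [N long_v].
pose pre q := epsilon (inhabits [::]) (fun p => maps_prefix v p q).
have pre_spec q : N <= size q -> maps_prefix v (pre q) q.
  by move/long_v; apply: (epsilon_spec _ (fun p => maps_prefix v p q)).
have pre_eq q p : N <= size q -> maps_prefix v p q -> pre q = p.
  move=> long_q Hp; apply: catw_inj => x; apply: inj_v.
  by rewrite pre_spec // Hp.
have pre_cat q r : N <= size q -> pre (q ++ r) = pre q ++ r.
  move=> long_q; apply: pre_eq; first by rewrite size_cat; lia.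
  exact/maps_prefix_cat/pre_spec.
have [b [Kb b_long]] : exists b, inK W b /\ forall q, N <= size q -> b q = a (pre q).
  apply: inK_extend => q long_q.
  by rewrite -!cats1 !pre_cat // !cats1 -Ka.
exists b; split=> // p q Hpq.
apply: (inK_eq_of_long_extensions (N := N)) => // r long_r.
have long_qr : N <= size (q ++ r) by rewrite size_cat; lia.
by rewrite b_long // (pre_eq _ _ long_qr (maps_prefix_cat r Hpq)).
Qed.

Lemma transports_unique a b b' v : reaches_long_prefixes v -> inK W b -> inK W b' ->
  transports v a b -> transports v a b' -> b = b'.
Proof.
move=> [N long_v] Kb Kb' ab ab'; apply: functional_extensionality => q.
apply: (inK_eq_of_long_extensions (N := N)) => // r long_r.
have [p Hp] := long_v (q ++ r) ltac:(rewrite size_cat; lia).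
by rewrite (ab _ _ Hp) (ab' _ _ Hp).
Qed.

Lemma piRel_transports a b v : inK W a -> piRel W v a b -> transports v a b.
Proof.
move=> Ka [Kb [n [t [s [sigma [v_rep b_code]]]]]] p q Hpq.
have [code_t _ _ _] := v_rep.
have [N long_t] := prefix_code_covers_long_words code_t.
apply: (inK_eq_of_long_extensions (N := N)) => // r long_r.
have [i [u E]] := long_t (p ++ r) ltac:(rewrite size_cat; lia).
suff -> : q ++ r = s (sigma i) ++ u by rewrite b_code E.
apply: catw_inj => x.
by rewrite -(maps_prefix_cat r Hpq) E; apply: (code_rep_maps_prefix v_rep).
Qed.

Lemma transports_piRel a b v : inV v -> inK W b -> transports v a b -> piRel W v a b.
Proof.
move=> [_ [n [t [s [sigma v_rep]]]]] Kb ab; split=> //.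
by exists n, t, s, sigma; split=> // i u; apply/ab/(code_rep_maps_prefix v_rep).
Qed.

Lemma pi_spec a v : inK W a -> inV v ->
  inK W (Defs.pi W v a) /\ transports v a (Defs.pi W v a).
Proof.
move=> Ka Vv; have piRel_pi : piRel W v a (Defs.pi W v a).
  apply: epsilon_spec.
  have [b [Kb ab]] := transports_exists Ka (inV_inj Vv) (inV_reaches_long_prefixes Vv).
  by exists b; apply: transports_piRel.
by split; [case: piRel_pi | apply: piRel_transports].
Qed.

Lemma pi_eq a b v : inK W a -> inV v -> inK W b -> transports v a b -> Defs.pi W v a = b.
Proof.
move=> Ka Vv Kb ab; have [Kpi a_pi] := pi_spec Ka Vv.
exact: transports_unique (inV_reaches_long_prefixes Vv) Kpi Kb a_pi ab.
Qed.

Lemma transports_comp a b e v w : maps_long_prefixes w -> inK W a -> inK W e ->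
  transports w a b -> transports v b e -> transports (v \o w) a e.
Proof.
move=> [N long_w] Ka Ke ab be p q Hpq.
apply: (inK_eq_of_long_extensions (N := N)) => // r long_r.
have [m Hm] := long_w (p ++ r) ltac:(rewrite size_cat; lia).
rewrite -(ab _ _ Hm); apply: be => x.
by rewrite -Hm -(maps_prefix_cat r Hpq).
Qed.

Lemma pi_comp a v w : inK W a -> inV v -> inV w ->
  Defs.pi W v (Defs.pi W w a) = Defs.pi W (v \o w) a.
Proof.
move=> Ka Vv Vw; have [Kwa a_wa] := pi_spec Ka Vw; have [Kvwa wa_vwa] := pi_spec Kwa Vv.
symmetry; apply: pi_eq => //; first exact: inV_comp.
exact: transports_comp (inV_maps_long_prefixes Vw) Ka Kvwa a_wa wa_vwa.
Qed.

End Action.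

(** [r] is the path from the root read backwards: its head is the last step. *)
Fixpoint split_along (T : Type) (split : T -> T * T) (root : T) (r : word) : T :=
  if r is z :: r' then (if z then snd else fst) (split (split_along split root r'))
  else root.

Section Group.
Variable Gamma : groupType.
Local Open Scope group_scope.
Implicit Types W : Gamma -> Gamma -> Gamma.

Lemma surjective2_inK W : surjective2 W -> exists a, inK W a.
Proof.
move=> surj_W; pose split g := epsilon (inhabits (1, 1)) (fun xy => W xy.1 xy.2 = g).
have splitK g : W (split g).1 (split g).2 = g.
  have [x [y Exy]] := surj_W g.
  by apply: (epsilon_spec _ (fun xy => W xy.1 xy.2 = g)); exists (x, y).
by exists (fun u => split_along split 1 (rev u)) => u; rewrite !rev_rcons /= splitK.
Qed.

Lemma group_morph2_1 W : group_morph2 W -> W 1 1 = 1.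
Proof.
by move=> morph_W; apply: (mulgI (W 1 1)); rewrite mulg1 -morph_W mul1g.
Qed.

Lemma group_morph2_V W (x y : Gamma) : group_morph2 W -> W x^-1 y^-1 = (W x y)^-1.
Proof.
by move=> morph_W; symmetry; apply: mulg1_eq; rewrite -morph_W !mulgV group_morph2_1.
Qed.

Lemma transports_conj v (c a e c' a' e' : word -> Gamma) :
  transports v c c' -> transports v a a' -> transports v e e' ->
  transports v (fun u => (c u)^-1 * a u * e u) (fun u => (c' u)^-1 * a' u * e' u).
Proof.
by move=> cc' aa' ee' p q Hpq; rewrite (cc' _ _ Hpq) (aa' _ _ Hpq) (ee' _ _ Hpq).
Qed.

End Group.

Definition lmul_comp (Gamma : groupType) (h : Gamma) (omega : Gamma -> Gamma -> Gamma) :=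
  fun x y : Gamma => (h * omega x y)%g.

Section Conjugation.
Variable Gamma : groupType.
Local Open Scope group_scope.
Variables (omega : Gamma -> Gamma -> Gamma) (h : Gamma).
Hypothesis omega_morph : group_morph2 omega.
Local Notation omega' := (ad_comp h omega).
Local Notation omega'' := (lmul_comp h omega).
Implicit Types (a b c e : word -> Gamma).

Lemma surjective2_lmul_comp : surjective2 omega -> surjective2 omega''.
Proof.
move=> surj g; have [x [y Exy]] := surj (h^-1 * g).
by exists x, y; rewrite /lmul_comp Exy mulVKg.
Qed.

Lemma inK_conj c a e : inK omega'' c -> inK omega' a -> inK omega'' e ->
  inK omega (fun u => (c u)^-1 * a u * e u).
Proof.
move=> Kc Ka Ke u; rewrite Kc Ka Ke /lmul_comp /ad_comp !omega_morph.
by rewrite !group_morph2_V // invgM !mulgA !mulgVK.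
Qed.

Lemma inK_conjV c b e : inK omega'' c -> inK omega b -> inK omega'' e ->
  inK omega' (fun u => c u * b u * (e u)^-1).
Proof.
move=> Kc Kb Ke u; rewrite Kc Kb Ke /lmul_comp /ad_comp !omega_morph.
by rewrite !group_morph2_V // invgM !mulgA.
Qed.

Variable c : word -> Gamma.
Hypothesis Kc : inK omega'' c.
Local Notation d v := (Defs.pi omega'' v c).

Definition conj_G (x : Gcarrier Gamma) : Gcarrier Gamma :=
  (fun u => (c u)^-1 * x.1 u * d x.2 u, x.2).

Lemma conj_G_inG (x : Gcarrier Gamma) : inG omega' x -> inG omega (conj_G x).
Proof.
by case: x => a v [Ka Vv]; split=> //; apply: inK_conj (pi_spec Kc Vv).1.
Qed.

Lemma conj_G_bij (y : Gcarrier Gamma) :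
  inG omega y -> exists! x : Gcarrier Gamma, inG omega' x /\ conj_G x = y.
Proof.
case: y => b v [Kb Vv]; have Kdv := (pi_spec Kc Vv).1.
exists (fun u => c u * b u * (d v u)^-1, v); split.
  split; first by split=> //; apply: inK_conjV.
  congr pair; apply: functional_extensionality => u.
  by rewrite /= !mulgA mulVg mul1g mulgVK.
move=> [a v'] [_ [<- <-]]; congr pair; apply: functional_extensionality => u.
by rewrite /= !mulgA mulgV mul1g mulgK.
Qed.

Lemma pi_conj b v w : inK omega' b -> inV v -> inV w ->
  Defs.pi omega v (fun u => (c u)^-1 * b u * d w u)
  = fun u => (d v u)^-1 * Defs.pi omega' v b u * d (v \o w) u.
Proof.
move=> Kb Vv Vw; have [Kdv c_dv] := pi_spec Kc Vv; have Kdw := (pi_spec Kc Vw).1.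
have [Kb' b_b'] := pi_spec Kb Vv; have [Kdvw dw_dvw] := pi_spec Kdw Vv.
apply: pi_eq => //; first exact: inK_conj.
  by apply: inK_conj => //; rewrite -pi_comp.
by apply: transports_conj => //; rewrite -pi_comp.
Qed.

Lemma conj_G_morph (x y : Gcarrier Gamma) : inG omega' x -> inG omega' y ->
  conj_G (Gmul omega' x y) = Gmul omega (conj_G x) (conj_G y).
Proof.
case: x y => a v [b w] [Ka Vv] [Kb Vw]; rewrite /Gmul /conj_G /Kmul /= pi_conj //.
by congr pair; apply: functional_extensionality => u; rewrite !mulgA mulgK.
Qed.

End Conjugation.

Theorem mainTheorem15 (Gamma : groupType) (omega : Gamma -> Gamma -> Gamma) :
  group_morph2 omega -> surjective2 omega ->
  forall h : Gamma, G_isomorphic (ad_comp h omega) omega.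
Proof.
move=> omega_morph omega_surj h.
have [c Kc] := surjective2_inK (surjective2_lmul_comp h omega_surj).
exists (conj_G omega h c); split.
- exact: conj_G_inG.
- exact: conj_G_bij.
- exact: conj_G_morph.
Qed.
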